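(* There is an absolute constant $\alpha>0$ such that for every integer $k>5$ there exists a $k$-terminal network $(G,c)$ such that every mimicking network $(G',c')$ of $(G,c)$ satisfies $|V(G')|\ge 2^{\alpha k}$. Moreover, $G$ can be taken to be bipartite with all the terminals on one side of the bipartition and all the non-terminals on the other side.
   Context: A network $(G,c)$ is an undirected graph $G$ with edge costs $c:E(G)\to\mathbb{R}^+$; its size is $|V(G)|$. A $k$-terminal network additionally has a set $Q=\{q_1,\dots,q_k\}\subseteq V(G)$ of distinguished vertices called terminals. For $S\subset Q$ with $S\neq\emptyset,Q$, write $\bar S=Q\setminus S$; a cut $(W,V(G)\setminus W)$ is $S$-separating if $W\cap Q\in\{S,\bar S\}$. The cost of a cut is the total cost of the edges with exactly one endpoint in $W$ (the cutset). $\mathrm{mincut}_{G,c}(S,\bar S)$ denotes the minimum cost of an $S$-separating cut. A mimicking network of a $k$-terminal network $(G,c)$ is a $k$-terminal network $(G',c')$ with the same terminal set $Q$ such that $\mathrm{mincut}_{G',c'}(S,\bar S)=\mathrm{mincut}_{G,c}(S,\bar S)$ for every $S\subset Q$ with $S\neq\emptyset,Q$. *)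

From mathcomp Require Import all_boot.
From Stdlib Require Import Reals.

Set Implicit Arguments.
Unset Strict Implicit.
Unset Printing Implicit Defensive.

(* A k-terminal network: a finite simple undirected graph (symmetric,
   irreflexive adjacency), a cost function that is symmetric and strictly
   positive on edges (only its values on edges are ever used), and k distinct
   terminals q_0, ..., q_{k-1} given by an injective labelling. *)
Record network (k : nat) := Network {
  netV : finType;
  adj : rel netV;
  cost : netV -> netV -> R;
  term : 'I_k -> netV;
  adj_sym : symmetric adj;
  adj_irr : irreflexive adj;
  cost_sym : forall x y, cost x y = cost y x;
  cost_pos : forall x y, adj x y -> (0 < cost x y)%R;
  term_inj : injective term
}.

Section Cuts.
Variables (k : nat) (N : network k).

Definition cut_cost (W : {set netV N}) : R :=
  \big[Rplus/0%R]_(x in W) \big[Rplus/0%R]_(y | (y \notin W) && adj x y) cost x y.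

Definition separating (S : {set 'I_k}) (W : {set netV N}) : bool :=
  ([set i | term N i \in W] == S) || ([set i | term N i \in W] == ~: S).

(* minimum cost of an S-separating cut; the set term @: S is always
   S-separating, so the minimum is taken over a nonempty family *)
Definition mincut (S : {set 'I_k}) : R :=
  foldr Rmin (cut_cost (term N @: S))
    [seq cut_cost W | W <- enum [pred W : {set netV N} | separating S W]].

End Cuts.

Definition mimicking (k : nat) (N' N : network k) : Prop :=
  forall S : {set 'I_k}, S != set0 -> S != setT -> mincut N' S = mincut N S.

Definition terminal_bipartite (k : nat) (N : network k) : Prop :=
  forall x y : netV N, adj x y -> (x \in codom (term N)) != (y \in codom (term N)).

From mathcomp Require Import all_boot zify.
From Stdlib Require Import Reals Lra IndefiniteDescription.
(* Reals rebinds [^] on [nat] to [Nat.pow]; restore MathComp's [expn]. *)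
Import ssrnat.
From HB Require Import structures.

Set Implicit Arguments.
Unset Strict Implicit.
Unset Printing Implicit Defensive.

(* Write k = p + 2 and L = 2^p.  The network G_p is the complete bipartite
   graph between the k terminals and L non-terminals, with integer costs.
   Each non-terminal i may be put on either side of a cut independently, so
   the S-separating min-cut of G_p is  f(S) = sum_i min(w_i(S), w_i(~S)),
   where w_i(X) is the cost from i to the terminals in X.  The costs are tuned
   so that for the L "row" sets S_j (terminal 1 plus the terminals 2 + r for
   the binary digits r of j) we get  f(S_j) = D * h_j + sum_(i < j) B^i;
   reading these numbers in base B shows that  y |-> sum_j y_j f(S_j)  is
   injective on coefficient vectors y bounded by H = (L + 1)^L.

   Conversely, in a network N' on n vertices, every cut cost is a combination
   sum_e c'(e) chi_W(e) over the n^2 ordered vertex pairs e.  Choosing minimum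
   cuts W_j for the S_j, a pigeonhole (Siegel-type) argument produces, when
   n^2 < L, distinct y, y' bounded by H with sum_j y_j chi_(W_j) =
   sum_j y'_j chi_(W_j) pointwise; if N' mimics G_p this forces
   sum_j y_j f(S_j) = sum_j y'_j f(S_j), a contradiction.  Hence n^2 >= 2^p,
   i.e. n >= 2^(k/3) once k >= 6. *)

Section MinOfList.
Variables (T : eqType) (f : T -> R).
Local Open Scope R_scope.

Lemma foldr_Rmin_lb x0 s W : W \in s -> foldr Rmin x0 [seq f W | W <- s] <= f W.
Proof.
elim: s => //= a s IH; rewrite in_cons => /orP [/eqP -> | h].
  exact: Rmin_l.
exact: Rle_trans (Rmin_r _ _) (IH h).
Qed.

Lemma foldr_Rmin_glb x0 s b : b <= x0 -> (forall W, W \in s -> b <= f W) ->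
  b <= foldr Rmin x0 [seq f W | W <- s].
Proof.
move=> h0; elim: s => //= a s IH H.
apply: Rmin_glb; first by apply: H; rewrite mem_head.
by apply: IH => W hW; apply: H; rewrite in_cons hW orbT.
Qed.

Lemma foldr_Rmin_attained x0 s : foldr Rmin x0 [seq f W | W <- s] = x0 \/
  exists2 W, W \in s & foldr Rmin x0 [seq f W | W <- s] = f W.
Proof.
elim: s => [|a s IH] /=; first by left.
rewrite /Rmin; case: Rle_dec => _.
  by right; exists a => //; rewrite mem_head.
case: IH => [->|[W hW ->]]; first by left.
by right; exists W => //; rewrite in_cons hW orbT.
Qed.
End MinOfList.

Section Mincut.
Variables (k : nat) (N : network k).

Lemma term_separating S : separating S (term N @: S).
Proof.
apply/orP; left; apply/eqP/setP => i; rewrite inE.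
by apply/imsetP/idP => [[j hj /term_inj ->] //|h]; exists i.
Qed.

Lemma mincut_lb S (W : {set netV N}) : separating S W -> (mincut N S <= cut_cost W)%R.
Proof. by move=> h; apply: foldr_Rmin_lb; rewrite mem_enum. Qed.

Lemma mincut_glb S b :
  (forall W : {set netV N}, separating S W -> b <= cut_cost W)%R -> (b <= mincut N S)%R.
Proof.
move=> H; apply: foldr_Rmin_glb; first exact: H (term_separating S).
by move=> W; rewrite mem_enum => /H.
Qed.

Lemma mincut_witnesses (I : Type) (S : I -> {set 'I_k}) :
  exists W : I -> {set netV N}, forall i, mincut N (S i) = cut_cost (W i).
Proof.
have attained i : exists W : {set netV N}, mincut N (S i) = cut_cost W.
  case: (foldr_Rmin_attained (@cut_cost _ N) (cut_cost (term N @: S i))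
           (enum [pred W : {set netV N} | separating (S i) W])) => [h|[W _ h]].
    by exists (term N @: S i).
  by exists W.
exists (fun i => proj1_sig (constructive_indefinite_description _ (attained i))).
by move=> i; case: constructive_indefinite_description.
Qed.
End Mincut.

(* Stdlib's [Rplus] and [Rmult] are not registered as bigop monoids; these
   instances give access to the generic big-operator lemmas on real sums. *)
Lemma Rplus_associative : associative Rplus. Proof. by move=> x y z; lra. Qed.
Lemma Rmult_associative : associative Rmult. Proof. by move=> x y z; ring. Qed.
HB.instance Definition _ :=
  Monoid.isComLaw.Build R 0%R Rplus Rplus_associative Rplus_comm Rplus_0_l.
HB.instance Definition _ :=
  Monoid.isComLaw.Build R 1%R Rmult Rmult_associative Rmult_comm Rmult_1_l.
HB.instance Definition _ := Monoid.isMulLaw.Build R 0%R Rmult Rmult_0_l Rmult_0_r.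
HB.instance Definition _ :=
  Monoid.isAddLaw.Build R Rmult Rplus Rmult_plus_distr_r Rmult_plus_distr_l.

Lemma INR_sum (I : Type) (r : seq I) (P : pred I) (F : I -> nat) :
  INR (\sum_(i <- r | P i) F i) = \big[Rplus/0%R]_(i <- r | P i) INR (F i).
Proof. exact: (big_morph INR plus_INR). Qed.

Section CutsAsSums.
Variables (k : nat) (N : network k).

Definition crosses (W : {set netV N}) (e : netV N * netV N) : nat :=
  [&& e.1 \in W, e.2 \notin W & adj e.1 e.2].

Lemma cut_cost_pairs W : cut_cost W =
  \big[Rplus/0%R]_(e : netV N * netV N) (cost e.1 e.2 * INR (crosses W e))%R.
Proof.
rewrite /cut_cost -(pair_big xpredT xpredT (fun x z => cost x z * INR (crosses W (x, z))))%R /=.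
rewrite big_mkcond; apply: eq_bigr => x _; rewrite big_mkcond /=.
case hx: (x \in W); last by rewrite big1 // => z _; rewrite /crosses /= hx /=; ring.
apply: eq_bigr => z _; rewrite /crosses /= hx /=.
by case: (_ && _); rewrite /= ?Rmult_1_r ?Rmult_0_r.
Qed.

Lemma cut_cost_combination M (W : 'I_M -> {set netV N}) (y : 'I_M -> nat) :
  \big[Rplus/0%R]_(j < M) (INR (y j) * cut_cost (W j))%R =
  \big[Rplus/0%R]_(e : netV N * netV N)
     (cost e.1 e.2 * INR (\sum_(j < M) y j * crosses (W j) e))%R.
Proof.
under eq_bigr => j _ do rewrite cut_cost_pairs big_distrr /=.
rewrite exchange_big /=; apply: eq_bigr => e _.
rewrite INR_sum big_distrr /=; apply: eq_bigr => j _.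
by rewrite mult_INR; ring.
Qed.
End CutsAsSums.

(* Counting inequality behind the pigeonhole lemma: with H = (M+1)^M there are
   more coefficient vectors in [0, H]^M than possible images in [0, M H]^c. *)
Lemma pigeonhole_count M c : (c < M)%N ->
  ((M * M.+1 ^ M + 1) ^ c < (M.+1 ^ M).+1 ^ M)%N.
Proof.
case: M => [//|m] hc; set H := m.+2 ^ m.+1.
have H_gt0 : (0 < H)%N by rewrite /H expn_gt0.
have exp_monotone a b e : (a <= b)%N -> (a ^ e <= b ^ e)%N.
  by move=> ab; elim: e => // e IH; rewrite !expnS leq_mul.
apply: (@leq_ltn_trans ((m.+2 * H) ^ m)).
  apply: (@leq_trans ((m.+1 * H + 1) ^ m)); first by rewrite leq_pexp2l ?addn1.
  by apply: exp_monotone; rewrite mulSn addnC leq_add2r.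
apply: (@leq_trans (H ^ m.+1)); last by rewrite leq_exp2r // leqnSn.
rewrite expnMn expnS ltn_pmul2r; last by rewrite expn_gt0 H_gt0.
by rewrite /H ltn_exp2l.
Qed.

Lemma small_kernel_vector M (E : finType) (chi : E -> 'I_M -> nat) :
  (forall e j, chi e j <= 1)%N -> (#|E| < M)%N ->
  exists y y' : 'I_M -> nat,
    [/\ forall j, (y j <= M.+1 ^ M)%N, forall j, (y' j <= M.+1 ^ M)%N,
        ~ (forall j, y j = y' j) &
        forall e, (\sum_(j < M) y j * chi e j = \sum_(j < M) y' j * chi e j)%N].
Proof.
move=> chi_le1 hE; set H := M.+1 ^ M.
have form_le (y : {ffun 'I_M -> 'I_H.+1}) e : (\sum_(j < M) y j * chi e j <= M * H)%N.
  rewrite -[M in (_ <= M * _)%N]card_ord -sum_nat_const; apply: leq_sum => j _.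
  apply: (@leq_trans (y j * 1)); first by rewrite leq_mul2l chi_le1 orbT.
  by rewrite muln1 -ltnS.
pose forms (y : {ffun 'I_M -> 'I_H.+1}) : {ffun E -> 'I_(M * H).+1} :=
  [ffun e => inord (\sum_(j < M) y j * chi e j)].
have /injectivePn [y [y' hne hyy]] : ~~ injectiveb forms.
  apply/injectiveP => /leq_card; rewrite !card_ffun !card_ord => too_few.
  have := pigeonhole_count hE; rewrite addn1 -/H => too_many.
  by have := leq_ltn_trans too_few too_many; rewrite ltnn.
exists (fun j => nat_of_ord (y j)), (fun j => nat_of_ord (y' j)); split.
- by move=> j; rewrite -ltnS.
- by move=> j; rewrite -ltnS.
- move=> eq_yy'; move/eqP: hne; apply.
  by apply/ffunP => j; apply: val_inj; exact: eq_yy'.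
- move=> e; have := congr1 (fun g : {ffun E -> _} => nat_of_ord (g e)) hyy.
  by rewrite /forms !ffunE /= !inordK // ltnS.
Qed.

Lemma base_split B M (a : nat -> nat) A :
  (\sum_(i < M.+1) a i * B ^ i + A * B ^ M.+1 =
   a 0 + B * (\sum_(i < M) a i.+1 * B ^ i + A * B ^ M))%N.
Proof.
rewrite big_ord_recl /= expn0 muln1 -addnA; congr (_ + _).
rewrite mulnDr big_distrr /=; congr (_ + _).
  by apply: eq_bigr => i _; rewrite /bump /= add1n expnS mulnCA.
by rewrite expnS mulnCA.
Qed.

Lemma base_digits_unique B M (a b : nat -> nat) A A' : (0 < B)%N ->
  (forall i, i < M -> a i < B)%N -> (forall i, i < M -> b i < B)%N ->
  (\sum_(i < M) a i * B ^ i + A * B ^ M = \sum_(i < M) b i * B ^ i + A' * B ^ M)%N ->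
  (forall i, i < M -> a i = b i)%N /\ A = A'.
Proof.
move=> B_gt0; elim: M a b => [|M IH] a b ha hb.
  by rewrite !big_ord0 !add0n !expn0 !muln1.
rewrite !base_split => eq_ab.
have a0_b0 : a 0 = b 0.
  have := congr1 (modn^~ B) eq_ab.
  by rewrite ![_ + B * _]addnC ![B * _]mulnC !modnMDl !modn_small ?ha ?hb.
move: eq_ab; rewrite a0_b0 => /addnI /eqP; rewrite eqn_mul2l eqn0Ngt B_gt0 /= => /eqP.
case/(IH (fun i => a i.+1) (fun i => b i.+1) (fun i => ha i.+1) (fun i => hb i.+1))
  => high_eq ->.
by split=> // -[|i] hi //; exact: high_eq.
Qed.

Lemma binary_expansion p j : (j < 2 ^ p)%N -> (\sum_(r < p) odd (j %/ 2 ^ r) * 2 ^ r = j)%N.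
Proof.
elim: p j => [|p IH] j hj.
  by rewrite big_ord0; move: hj; rewrite expn0 ltnS leqn0 => /eqP.
rewrite big_ord_recl /= expn0 divn1 muln1.
have half_lt : (j %/ 2 < 2 ^ p)%N by rewrite ltn_divLR // -expnSr.
transitivity (odd j + 2 * \sum_(i < p) odd (j %/ 2 %/ 2 ^ i) * 2 ^ i)%N.
  congr (_ + _); rewrite big_distrr /=; apply: eq_bigr => i _.
  by rewrite /bump /= add1n expnS -divnMA mulnCA.
by rewrite (IH _ half_lt) -{3}(odd_double_half j) divn2 -muln2 mulnC.
Qed.

Lemma binary_complement p j : (j < 2 ^ p)%N ->
  (\sum_(r < p) (~~ odd (j %/ 2 ^ r)) * 2 ^ r = (2 ^ p).-1 - j)%N.
Proof.
move=> hj; have all_ones : (\sum_(r < p) 2 ^ r = (2 ^ p).-1)%N.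
  elim: p {hj} => [|p IH]; first by rewrite big_ord0.
  rewrite big_ord_recr /= IH expnS; have : (0 < 2 ^ p)%N by rewrite expn_gt0.
  lia.
have := binary_expansion hj; move: all_ones.
rewrite (eq_bigr (fun r : 'I_p => odd (j %/ 2 ^ r) * 2 ^ r + (~~ odd (j %/ 2 ^ r)) * 2 ^ r)%N).
  by rewrite big_split /=; lia.
by move=> r _; case: odd; rewrite ?mul1n ?mul0n ?addn0.
Qed.

Section HardNetwork.
Variable p : nat.

(* Parameters of G_p: [rows] non-terminals, coefficient bound [coef_bound]
   (the bound of [small_kernel_vector]), a base [base] exceeding every digit
   that can arise, and a scale [scale] dominating every power [base ^ i]. *)
Definition rows : nat := 2 ^ p.
Definition coef_bound : nat := rows.+1 ^ rows.
Definition base : nat := rows * coef_bound + 1.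
Definition scale : nat := base ^ rows.

Lemma base_gt0 : (0 < base)%N. Proof. by rewrite /base addn1. Qed.

Lemma base_pow_lt_scale (i : 'I_rows) : (base ^ i < scale)%N.
Proof. by rewrite /scale ltn_exp2l // /base addn1 ltnS muln_gt0 !expn_gt0. Qed.

(* Cost of the edge between non-terminal [i] and terminal [q]:
   terminal 0 carries the triangular part [base ^ i], terminal 1 a constant,
   and terminal [r + 2] the binary place value [2 ^ r] (all scaled). *)
Definition weight (i : 'I_rows) (q : 'I_p.+2) : nat :=
  if q == 0 :> nat then scale * (2 * i + 2) + base ^ i
  else if q == 1 :> nat then scale * rows else scale * 2 ^ (q - 2).

Lemma weight_gt0 i q : (0 < weight i q)%N.
Proof.
have scale_gt0 : (0 < scale)%N by rewrite /scale expn_gt0 base_gt0.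
rewrite /weight; case: ifP => _; first by rewrite ltn_addr // muln_gt0 scale_gt0 addn2.
by case: ifP => _; rewrite muln_gt0 scale_gt0 expn_gt0.
Qed.

Definition vertex : finType := ('I_p.+2 + 'I_rows)%type.

Definition bip_adj (x y : vertex) : bool :=
  match x, y with inl _, inr _ | inr _, inl _ => true | _, _ => false end.

Definition bip_weight (x y : vertex) : nat :=
  match x, y with inl q, inr i | inr i, inl q => weight i q | _, _ => 0%N end.

Lemma bip_adj_sym : symmetric bip_adj. Proof. by case=> a [] b. Qed.
Lemma bip_adj_irr : irreflexive bip_adj. Proof. by case. Qed.
Lemma bip_cost_sym x y : INR (bip_weight x y) = INR (bip_weight y x).
Proof. by case: x y => a [] b. Qed.
Lemma bip_cost_pos x y : bip_adj x y -> (0 < INR (bip_weight x y))%R.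
Proof. by case: x y => a [] b //= _; apply: lt_0_INR; apply/ltP; exact: weight_gt0. Qed.
Lemma inl_injective : injective (@inl 'I_p.+2 'I_rows). Proof. by move=> a b []. Qed.

Definition hard_network : network p.+2 :=
  @Network p.+2 vertex bip_adj (fun x y => INR (bip_weight x y)) inl
    bip_adj_sym bip_adj_irr bip_cost_sym bip_cost_pos inl_injective.

Lemma hard_network_bipartite : terminal_bipartite hard_network.
Proof.
have is_term q : (@inl 'I_p.+2 'I_rows q) \in codom (term hard_network).
  by apply/codomP; exists q.
have not_term i : (@inr 'I_p.+2 'I_rows i) \notin codom (term hard_network).
  by apply/codomP => -[q].
by case=> [q|i] [q'|i'] //= _; rewrite ?is_term ?(negbTE (not_term _)).
Qed.

Definition side_weight (i : 'I_rows) (X : {set 'I_p.+2}) : nat := \sum_(q in X) weight i q.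

(* The S-separating min-cut value of G_p: each non-terminal independently
   joins the cheaper side. *)
Definition cut_value (S : {set 'I_p.+2}) : nat :=
  \sum_(i < rows) minn (side_weight i S) (side_weight i (~: S)).

Definition cut_weight (W : {set vertex}) : nat :=
  \sum_(i < rows) (if inr i \in W then \sum_(q | inl q \notin W) weight i q
                   else \sum_(q | inl q \in W) weight i q).

Lemma cut_cost_hard (W : {set vertex}) : cut_cost (N := hard_network) W = INR (cut_weight W).
Proof.
rewrite /cut_cost.
under eq_bigr => x _ do rewrite -INR_sum.
rewrite -INR_sum; congr INR; rewrite /cut_weight big_sumType /=.
under eq_bigr => q _ do rewrite big_sumType /= big1_eq add0n.
under [X in (_ + X)%N]eq_bigr => i _ do rewrite big_sumType /= [X in (_ + X)%N]big1_eq addn0.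
rewrite exchange_big /= [RHS](bigID (fun i => inr i \in W)) /= addnC; congr addn.
  by apply: eq_bigr => i hi; rewrite hi; apply: eq_bigl => q; rewrite andbT.
by apply: eq_big => [i|i]; [rewrite andbT | rewrite andbT => /negbTE ->].
Qed.

Lemma side_weight_in (i : 'I_rows) (W : {set vertex}) :
  \sum_(q | inl q \in W) weight i q = side_weight i [set q | inl q \in W].
Proof. by apply: eq_bigl => q; rewrite inE. Qed.

Lemma side_weight_notin (i : 'I_rows) (W : {set vertex}) :
  \sum_(q | inl q \notin W) weight i q = side_weight i (~: [set q | inl q \in W]).
Proof. by apply: eq_bigl => q; rewrite !inE. Qed.

Lemma cut_value_le S (W : {set vertex}) :
  separating (N := hard_network) S W -> (cut_value S <= cut_weight W)%N.
Proof.
move=> sepW; apply: leq_sum => i _; rewrite side_weight_in side_weight_notin.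
by case/orP: sepW => /eqP ->; case: (inr i \in W); rewrite ?setCK ?geq_minl ?geq_minr.
Qed.

Definition greedy_cut (S : {set 'I_p.+2}) : {set vertex} :=
  [set x | match x with inl q => q \in S | inr i => (side_weight i (~: S) <= side_weight i S)%N end].

Lemma greedy_cut_terminals S : [set q | inl q \in greedy_cut S] = S.
Proof. by apply/setP => q; rewrite !inE. Qed.

Lemma cut_weight_greedy S : cut_weight (greedy_cut S) = cut_value S.
Proof.
apply: eq_bigr => i _; rewrite side_weight_in side_weight_notin greedy_cut_terminals inE.
by rewrite /minn; case: leqP.
Qed.

Lemma mincut_hard S : mincut hard_network S = INR (cut_value S).
Proof.
apply: Rle_antisym.
  rewrite -cut_weight_greedy -cut_cost_hard; apply: mincut_lb.
  by rewrite /separating greedy_cut_terminals eqxx.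
by apply: mincut_glb => W sepW; rewrite cut_cost_hard; apply/le_INR/leP/cut_value_le.
Qed.

Definition row_set (j : 'I_rows) : {set 'I_p.+2} :=
  [set q : 'I_p.+2 | (q == 1 :> nat) || ((2 <= q)%N && odd (j %/ 2 ^ (q - 2)))].

Lemma row_set_proper j : row_set j != set0 /\ row_set j != setT.
Proof.
split; first by apply/set0Pn; exists (lift ord0 ord0); rewrite inE.
by apply/eqP => /setP /(_ ord0); rewrite !inE.
Qed.

Lemma side_weight_bits i (X : {set 'I_p.+2}) : side_weight i X =
  ((ord0 \in X) * weight i ord0 + (lift ord0 ord0 \in X) * weight i (lift ord0 ord0) +
   \sum_(r < p) (lift ord0 (lift ord0 r) \in X) * (scale * 2 ^ r))%N.
Proof.
rewrite /side_weight big_mkcond big_ord_recl big_ord_recl /= addnA.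
congr (_ + _ + _); first by case: (ord0 \in X); rewrite ?mul1n.
  by case: (lift ord0 ord0 \in X); rewrite ?mul1n.
apply: eq_bigr => r _; rewrite /weight /= /bump /= !add1n subn2.
by case: (_ \in X); rewrite ?mul1n ?mul0n.
Qed.

Lemma side_weight_row i j : side_weight i (row_set j) = (scale * (rows + j))%N.
Proof.
rewrite side_weight_bits !inE /= mul0n add0n mul1n mulnDr; congr addn.
rewrite -(binary_expansion (ltn_ord j)) big_distrr /=; apply: eq_bigr => r _.
by rewrite inE /= /bump /= !add1n subn2 mulnCA.
Qed.

Lemma side_weight_row_compl i j : side_weight i (~: row_set j) =
  (scale * (2 * i + 2) + base ^ i + scale * (rows.-1 - j))%N.
Proof.
rewrite side_weight_bits !inE /= mul1n mul0n addn0; congr addn.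
rewrite -(binary_complement (ltn_ord j)) big_distrr /=; apply: eq_bigr => r _.
by rewrite !inE /= /bump /= !add1n subn2 mulnCA.
Qed.

(* Arithmetic core of the construction: with [b < d], the cheaper side of
   non-terminal [i] for the row set [j] is the [row_set j] side iff [j <= i],
   and the low-order term [b] is paid exactly when [i < j]. *)
Lemma min_side d b l (i j : nat) : (b < d)%N -> (j < l)%N ->
  minn (d * (l + j)) (d * (2 * i + 2) + b + d * (l.-1 - j)) =
  (d * (if j <= i then l + j else 2 * i + 2 + (l.-1 - j)) + (i < j) * b)%N.
Proof.
move=> b_lt_d j_lt_l; case: leqP => [j_le_i | i_lt_j].
  rewrite mul0n addn0; apply/minn_idPl.
  by apply: (@leq_trans (d * (2 * i + 2 + (l.-1 - j)))); nia.
have cheaper : (d * (2 * i + 2) + b + d * (l.-1 - j) <= d * (l + j))%N.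
  by apply: (@leq_trans (d * (2 * i + 2 + (l.-1 - j) + 1))); nia.
by rewrite (minn_idPr cheaper) mul1n !mulnDr; lia.
Qed.

Definition high_part (j : 'I_rows) : nat :=
  \sum_(i < rows) (if (j <= i)%N then rows + j else 2 * i + 2 + (rows.-1 - j)).

Lemma cut_value_row j :
  cut_value (row_set j) = (scale * high_part j + \sum_(i < rows) (i < j)%N * base ^ i)%N.
Proof.
rewrite /cut_value /high_part big_distrr -big_split /=; apply: eq_bigr => i _.
rewrite side_weight_row side_weight_row_compl.
by rewrite min_side ?base_pow_lt_scale.
Qed.

Definition digit (y : 'I_rows -> nat) (i : nat) : nat := \sum_(j < rows) y j * (i < j).
Definition top_digit (y : 'I_rows -> nat) : nat := \sum_(j < rows) y j * high_part j.

Lemma row_combination (y : 'I_rows -> nat) :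
  (\sum_(j < rows) y j * cut_value (row_set j) =
   \sum_(i < rows) digit y i * base ^ i + top_digit y * base ^ rows)%N.
Proof.
under eq_bigr => j _ do rewrite cut_value_row mulnDr.
rewrite big_split /= addnC; congr addn.
  under eq_bigr => j _ do rewrite big_distrr /=.
  rewrite exchange_big /=; apply: eq_bigr => i _.
  by rewrite /digit big_distrl /=; apply: eq_bigr => j _; rewrite mulnA.
by rewrite /top_digit big_distrl /= /scale; apply: eq_bigr => j _; rewrite mulnCA mulnC.
Qed.

Lemma digit_lt_base (y : 'I_rows -> nat) i :
  (forall j, y j <= coef_bound)%N -> (digit y i < base)%N.
Proof.
move=> y_le; rewrite /digit /base addn1 ltnS.
rewrite -[rows in (_ <= rows * _)%N]card_ord -sum_nat_const; apply: leq_sum => j _.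
by apply: (@leq_trans (y j * 1)); rewrite ?leq_mul2l ?leq_b1 ?orbT ?muln1.
Qed.

(* Consecutive digits differ by one coefficient, so the digits determine
   every [y j] with [j > 0]. *)
Lemma digit_step (y : 'I_rows -> nat) (j : 'I_rows) :
  (0 < j)%N -> digit y j.-1 = (y j + digit y j)%N.
Proof.
move=> j_gt0; rewrite /digit (bigD1 j) //= (bigD1 j (P := xpredT)) //=.
rewrite prednK // ltnn muln0 add0n leqnn muln1; congr addn.
apply: eq_bigr => l l_neq_j; congr muln.
have : nat_of_ord l != j by [].
by move: j_gt0; case: (nat_of_ord j) => // jj _ /=; lia.
Qed.

(* The coefficient [y 0] is visible in the top part. *)
Lemma high_part_first (j : 'I_rows) : nat_of_ord j = 0%N -> (0 < high_part j)%N.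
Proof.
move=> j0; rewrite /high_part (bigD1 j) //= j0 leq0n /rows.
by rewrite addn0 ltn_addr // expn_gt0.
Qed.

Lemma row_combination_inj (y y' : 'I_rows -> nat) :
  (forall j, y j <= coef_bound)%N -> (forall j, y' j <= coef_bound)%N ->
  (\sum_(j < rows) y j * cut_value (row_set j) =
   \sum_(j < rows) y' j * cut_value (row_set j))%N ->
  forall j, y j = y' j.
Proof.
move=> y_le y'_le; rewrite !row_combination => eq_comb.
have [same_digit same_top] := base_digits_unique base_gt0
  (fun i _ => digit_lt_base i y_le) (fun i _ => digit_lt_base i y'_le) eq_comb.
have same_pos (j : 'I_rows) : (0 < j)%N -> y j = y' j.
  move=> j_gt0; have := digit_step y j_gt0; have := digit_step y' j_gt0.
  rewrite !same_digit ?(leq_ltn_trans (leq_pred _) (ltn_ord j)) //; lia.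
move=> j; case: (posnP j) => [j0|]; last exact: same_pos.
move: same_top; rewrite /top_digit (bigD1 j) //= (bigD1 j (P := xpredT)) //=.
rewrite (eq_bigr (fun l => y' l * high_part l)%N); last first.
  move=> l l_neq_j; rewrite same_pos // lt0n; apply: contraNneq l_neq_j => l0.
  by apply/eqP/val_inj; rewrite /= l0 j0.
move/addIn/eqP; rewrite eqn_mul2r => /orP [|/eqP //].
by rewrite eqn0Ngt high_part_first.
Qed.
End HardNetwork.

Lemma mimicking_pairs_lb p (N' : network p.+2) :
  mimicking N' (hard_network p) -> (2 ^ p <= #|netV N'| * #|netV N'|)%N.
Proof.
move=> mimics; rewrite leqNgt; apply/negP => few_pairs.
have [W mincut_W] := mincut_witnesses N' (@row_set p).
have card_pairs : (#|{: netV N' * netV N'}| < rows p)%N by rewrite card_prod.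
have [y [y' [y_le y'_le y_neq same_crossings]]] :=
  @small_kernel_vector _ _ (fun e j => crosses (W j) e) (fun _ _ => leq_b1 _) card_pairs.
apply: y_neq; apply: (row_combination_inj y_le y'_le).
have mimic_value (z : 'I_(rows p) -> nat) :
  INR (\sum_(j < rows p) z j * cut_value (row_set j)) =
  \big[Rplus/0%R]_(e : netV N' * netV N')
     (cost e.1 e.2 * INR (\sum_(j < rows p) z j * crosses (W j) e))%R.
  rewrite -cut_cost_combination INR_sum; apply: eq_bigr => j _.
  have [ne0 neT] := row_set_proper j.
  by rewrite mult_INR -mincut_W mimics // mincut_hard.
apply: INR_eq; rewrite !mimic_value; apply: eq_bigr => e _.
by rewrite same_crossings.
Qed.

Lemma INR_expn m e : INR (m ^ e) = (INR m ^ e)%R.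
Proof. by elim: e => [|e IH]; rewrite ?expn0 // expnS mult_INR IH. Qed.

Lemma Rpower_third_lb (p n : nat) : (4 <= p)%N -> (2 ^ p <= n * n)%N ->
  (Rpower 2 (1/3 * INR p.+2) <= INR n)%R.
Proof.
move=> p_ge4 pow_le_sq.
have INR_p : (4 <= INR p)%R by have := le_INR 4 p (elimT leP p_ge4); rewrite /=; lra.
have r_pos : (0 < Rpower 2 (1/3 * INR p.+2))%R by apply: exp_pos.
have r_sq : (Rpower 2 (1/3 * INR p.+2) * Rpower 2 (1/3 * INR p.+2) =
             Rpower 2 (2/3 * INR p.+2))%R.
  by rewrite -Rpower_plus; f_equal; lra.
have r_sq_le : (Rpower 2 (2/3 * INR p.+2) <= 2 ^ p)%R.
  rewrite -Rpower_pow; last lra.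
  by apply: Rle_Rpower; [lra | rewrite !S_INR; lra].
have sq_le : (2 ^ p <= INR n * INR n)%R.
  have INR_2 : INR 2 = 2%R by rewrite /=; lra.
  by rewrite -mult_INR -INR_2 -INR_expn; apply: le_INR; apply/leP.
have := pos_INR n; nra.
Qed.

Theorem theorem1p2 :
  exists alpha : R, (0 < alpha)%R /\
    forall k : nat, (5 < k)%N ->
      exists N : network k, terminal_bipartite N /\
        forall N' : network k, mimicking N' N ->
          (Rpower 2 (alpha * INR k) <= INR #|netV N'|)%R.
Proof.
exists (1/3)%R; split; first lra.
case=> [|[|p]] // k_gt5.
exists (hard_network p); split; first exact: hard_network_bipartite.
by move=> N' mimics; apply: Rpower_third_lb (mimicking_pairs_lb mimics).
Qed.
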